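(* Let $f \in \mathbb{Z}[x]$ be a polynomial with $f(\mathbb{N}) \subseteq \mathbb{N}$. Then the following two conditions are equivalent: (i) For every prime number $p$, the reduction map $f_p : \mathbb{Z}/p\mathbb{Z} \to \mathbb{Z}/p\mathbb{Z}$, $x \bmod p \mapsto f(x) \bmod p$, is not a cyclic permutation of length $p$ (i.e. it is not a permutation of $\mathbb{Z}/p\mathbb{Z}$ consisting of a single cycle of length $p$). (ii) For any $a, b \in \mathbb{N}$, if $f{\uparrow}_a{\uparrow}_b(n) \to \infty$ in $\mathbb{R}$ as $n \to \infty$, then for every prime number $p$ the limit $\lim_{n \to \infty} f{\uparrow}_a{\uparrow}_b(n)$ exists in the ring $\mathbb{Z}_p$ of $p$-adic integers, and this limit is independent of $b$.
   Context: $\mathbb{N} = \{1,2,3,\dots\}$ denotes the set of positive integers. For a map $g : X \to X$ and $x \in X$, $g^n$ denotes the $n$-th iterate of $g$ and $g{\uparrow}_x : \mathbb{N} \to X$ is the map $n \mapsto g^n(x)$. For $f$ as in the statement and $a \in \mathbb{N}$, $f{\uparrow}_a : \mathbb{N} \to \mathbb{N}$, $n \mapsto f^n(a)$, and $f{\uparrow}_a{\uparrow}_b = (f{\uparrow}_a){\uparrow}_b$, i.e. $f{\uparrow}_a{\uparrow}_b(n) = (f{\uparrow}_a)^n(b)$; equivalently, this is the sequence $y_n$ with $y_0 = b$ and $y_{n+1} = f^{y_n}(a)$. Positive integers are regarded as elements of $\mathbb{Z}_p$ via the natural embedding. *)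

From HB Require Import structures.
From mathcomp Require Import all_boot all_order all_algebra all_fingroup.
Set Implicit Arguments. Unset Strict Implicit. Unset Printing Implicit Defensive.
Import Order.TTheory GRing.Theory Num.Theory.
Local Open Scope ring_scope.

(* f restricted to the naturals (meaningful on positive integers, where f(N) ⊆ N). *)
Definition fnat (f : {poly int}) (n : nat) : nat := absz f.[n%:Z]%R.

Local Close Scope ring_scope.
Fixpoint iter_seq (f : {poly int}) (a b : nat) (n : nat) : nat :=
  match n with
  | 0 => b
  | m.+1 => iter (iter_seq f a b m) (fnat f) a
  end.

Local Open Scope ring_scope.
Definition red_map (f : {poly int}) (p : nat) (x : 'F_p) : 'F_p :=
  (map_poly (fun z : int => z%:~R : 'F_p) f).[x].

Definition is_full_cycle (f : {poly int}) (p : nat) : Prop :=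
  exists s : {perm 'F_p}, (forall x, s x = red_map f x) /\ #|porbits s| = 1%N.

Local Close Scope ring_scope.

Definition tends_to_infty (x : nat -> nat) : Prop :=
  forall M : nat, exists N, forall n, N <= n -> M <= x n.

(* The p-adic integers as the inverse limit of Z/p^k Z. *)
Definition padic_int (p : nat) :=
  {z : nat -> nat | forall k, z k < p ^ k /\ z k.+1 %% p ^ k = z k}.

Definition padic_lim (p : nat) (x : nat -> nat) (z : padic_int p) : Prop :=
  forall k, exists N, forall n, N <= n -> x n %% p ^ k = sval z k.
Arguments padic_lim : clear implicits.

From mathcomp Require Import all_boot all_order all_algebra all_fingroup.
From mathcomp Require Import zify polyrcf.
From Stdlib Require Import Classical_Prop IndefiniteDescription.
From Stdlib Require Import ProofIrrelevance FunctionalExtensionality.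
Set Implicit Arguments. Unset Strict Implicit. Unset Printing Implicit Defensive.
Import Order.TTheory GRing.Theory Num.Theory.

(* If no reduction f_p is a p-cycle, then for every modulus M > 0 the residue
   of f↑a↑b(n) mod M is eventually a constant c_M that does not depend on b,
   and the c_(p^k) form the common p-adic limit. By strong induction on M:
   either f^i(a) = f^j(a) mod M for some 0 < i < j <= M, and then for y >= i
   the residue f^y(a) mod M only depends on y mod d = j - i < M, which is
   eventually constant along y_n by induction (y_(n+1) = f^(y_n)(a)); or
   f^1(a), ..., f^M(a) are distinct mod M, hence cover Z/MZ, so the orbit of
   a covers Z/pZ for a prime p | M and f_p is a p-cycle.

   Conversely, if f_p is a p-cycle then f^r(a) = f^r'(a) mod p forces
   r = r' mod p, so the residue of y_(n+1) mod p determines that of y_n and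
   the eventual residue of y_n mod p is b mod p itself. Such an f is neither
   constant nor the identity, so f(x) > x for large x; starting from a large
   a, the sequences with b = 1 and b = 2 tend to infinity but their limits
   differ mod p. *)

Local Open Scope ring_scope.

Lemma horner_sub_dvdz (q : {poly int}) (x y : int) : (x - y %| q.[x] - q.[y])%Z.
Proof.
have /factor_theorem [r qE] : root (q - q.[y]%:P) y.
  by rewrite rootE hornerD hornerN hornerC subrr.
have := congr1 (horner^~ x) qE; rewrite !hornerE /= => ->.
exact: dvdz_mull.
Qed.

Lemma poly_int_eventually_pos (q : {poly int}) :
  0 < lead_coef q -> exists n : int, forall x, n <= x -> 0 < q.[x].
Proof.
move=> lq_gt0; pose qQ := map_poly (intr : int -> rat) q.
have lqQ_gt0 : 0 < lead_coef qQ.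
  by rewrite lead_coef_map_inj ?ltr0z //; exact: intr_inj.
have [n Hn] := poly_pinfty_gt_lc lqQ_gt0.
exists (Num.ceil n) => x nx; rewrite -(ltr0z rat) -horner_map.
by apply: lt_le_trans lqQ_gt0 (Hn _ _); rewrite -ceil_le_int.
Qed.

Lemma lead_coef_gt0_of_pos (q : {poly int}) :
  (forall n : nat, (0 < n)%N -> 0 < q.[n%:Z]) -> 0 < lead_coef q.
Proof.
move=> q_pos; have q_neq0 : q != 0.
  by apply: contraTneq (q_pos 1%N isT) => ->; rewrite horner0.
rewrite lt_def lead_coef_eq0 q_neq0 /= leNgt; apply/negP => lq_lt0.
have [|n Hn] := @poly_int_eventually_pos (- q); first by rewrite lead_coefN oppr_gt0.
have /Hn : n <= (absz n).+1%:Z by lia.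
by rewrite hornerN oppr_gt0 ltNge ltW ?q_pos.
Qed.

Lemma poly_eventually_gt_id (f : {poly int}) :
  (forall n : nat, (0 < n)%N -> 0 < f.[n%:Z]) ->
  ~ (forall n : nat, (0 < n)%N -> f.[n%:Z] = n%:Z) ->
  ~ (exists c, forall n : nat, (0 < n)%N -> f.[n%:Z] = c) ->
  exists n : int, forall x, n <= x -> x < f.[x].
Proof.
move=> f_pos not_id not_const.
have [size_le2|size_gt2] := leqP (size f) 2; last first.
  have [|n Hn] := @poly_int_eventually_pos (f - 'X).
    by rewrite lead_coefDl ?size_polyN ?size_polyX // lead_coef_gt0_of_pos.
  by exists n => x /Hn; rewrite hornerD hornerN hornerX subr_gt0.
have fE x : f.[x] = f`_1 * x + f`_0.
  rewrite (horner_coef_wide _ size_le2) !big_ord_recl big_ord0 /=.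
  by rewrite expr0 expr1 mulr1 addr0 addrC.
have f1_ge0 : 0 <= f`_1.
  rewrite leNgt; apply/negP => f1_lt0.
  have := f_pos (absz f`_0).+1 isT; rewrite fE; nia.
have [f1_eq0|f1_neq0] := eqVneq f`_1 0.
  by case: not_const; exists f`_0 => n _; rewrite fE f1_eq0 mul0r add0r.
have [f1_eq1|f1_neq1] := eqVneq f`_1 1.
  have [f0_eq0|f0_neq0] := eqVneq f`_0 0.
    by case: not_id => n _; rewrite fE f1_eq1 f0_eq0 mul1r addr0.
  have := f_pos 1%N isT; rewrite fE f1_eq1 => f_at1_gt0.
  by exists 0 => x _; rewrite fE f1_eq1; lia.
exists (absz f`_0).+1%:Z => x x_ge; rewrite fE; nia.
Qed.

Local Close Scope ring_scope.

Lemma eqmodSn_modulus1 d m : m = m.+1 %[mod d] -> d = 1.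
Proof. by move/eqP; rewrite eq_sym eqn_mod_dvd // subSnn dvdn1 => /eqP. Qed.

Lemma Fp_nat_eqmod p m n : prime p -> ((m%:R : 'F_p) = n%:R)%R <-> m = n %[mod p].
Proof.
move=> p_pr; split=> [/(congr1 val)|e]; first by rewrite /= !val_Fp_nat.
by rewrite -(Fp_nat_mod p_pr m) e Fp_nat_mod.
Qed.

(* [r.+1] rather than [r]: an orbit covering [T] without returning to [x]
   would not make [g] onto. *)
Lemma full_cycle_of_orbit (T : finType) (g : T -> T) x :
  (forall y, exists r, iter r.+1 g x = y) ->
  exists s : {perm T}, (forall y, s y = g y) /\ #|porbits s| = 1.
Proof.
move=> cover; have /image_injP/in2T g_inj : #|image g T| == #|T|.
  rewrite eqn_leq leq_image_card subset_leq_card //.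
  by apply/subsetP => y _; have [r <-] := cover y; exact: image_f.
exists (perm g_inj); split=> [y|]; first by rewrite permE.
suff -> : porbits (perm g_inj) = [set porbit (perm g_inj) x] by rewrite cards1.
apply/setP => Y; rewrite inE; apply/imsetP/eqP => [[y _ ->]|->]; last by exists x.
have [r <-] := cover y; rewrite -(eq_iter (permE g_inj)) -permX.
exact: porbit_perm.
Qed.

Lemma iter_perm_eqmod (T : finType) (s : {perm T}) x r r' :
  iter r s x = iter r' s x -> r = r' %[mod #|porbit s x|].
Proof.
set n := #|porbit s x|; have n_gt0 : 0 < n by rewrite lt0n card_porbit_neq0.
have iter_mod k : iter k s x = iter (k %% n) s x.
  have fix_x : iter (k %/ n * n) s x = x.
    by rewrite -permX mulnC expgM permX_fix // permX iter_porbit.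
  by rewrite {1}(divn_eq k n) addnC iterD fix_x.
rewrite (iter_mod r) (iter_mod r') -!(nth_traject s (ltn_pmod _ n_gt0)) => e.
apply/eqP; rewrite -(nth_uniq x _ _ (uniq_traject_porbit s x)) ?e //.
  by rewrite size_traject ltn_pmod.
by rewrite size_traject ltn_pmod.
Qed.

Lemma card_porbit_full_cycle (T : finType) (s : {perm T}) x :
  #|porbits s| = 1 -> #|porbit s x| = #|T|.
Proof.
move/eqP/cards1P => [A sA]; apply: eq_card => y; rewrite inE.
have: porbit s y \in porbits s by exact: imset_f.
have: porbit s x \in porbits s by exact: imset_f.
by rewrite sA !inE => /eqP -> /eqP <-; exact: porbit_id.
Qed.

Definition ends_in_residue (x : nat -> nat) (M c : nat) : Prop :=
  exists N, forall n, N <= n -> x n %% M = c.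

Lemma ends_in_residue_unique x M c c' :
  ends_in_residue x M c -> ends_in_residue x M c' -> c = c'.
Proof.
move=> [N xN] [N' xN'].
by rewrite -(xN (maxn N N')) ?leq_maxl // (xN' (maxn N N')) ?leq_maxr.
Qed.

Lemma padic_int_of_residues p x (c : nat -> nat) : 0 < p ->
  (forall k, ends_in_residue x (p ^ k) (c k)) -> exists z : padic_int p, sval z = c.
Proof.
move=> p_gt0 xc; have cP k : c k < p ^ k /\ c k.+1 %% p ^ k = c k.
  have [N xN] := xc k; have [N' xN'] := xc k.+1.
  rewrite -(xN (maxn N N')) ?leq_maxl // -(xN' (maxn N N')) ?leq_maxr //.
  by rewrite ltn_pmod ?expn_gt0 ?p_gt0 // (modn_dvdm _ (dvdn_exp2l p (leqnSn k))).
by exists (exist _ c cP).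
Qed.

Lemma padic_int_ext p (z z' : padic_int p) : sval z =1 sval z' -> z = z'.
Proof.
case: z z' => [z zP] [z' z'P] /= /functional_extensionality e.
exact: subset_eq_compat.
Qed.

Section PositiveOrbits.

Variable f : {poly int}.
Hypothesis f_pos :
  forall n : nat, (0 < n)%N -> exists m : nat, (0 < m)%N /\ (f.[n%:Z] = m%:Z)%R.

Lemma fnatE n : 0 < n -> (f.[n%:Z] = (fnat f n)%:Z)%R.
Proof. by move=> /f_pos [m [_ fn]]; rewrite /fnat fn. Qed.

Lemma fnat_gt0 n : 0 < n -> 0 < fnat f n.
Proof. by move=> /f_pos [m [m_gt0 fn]]; rewrite /fnat fn. Qed.

Lemma fnat_eqmod M x y : 0 < x -> 0 < y ->
  x = y %[mod M] -> fnat f x = fnat f y %[mod M].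
Proof.
move=> x_gt0 y_gt0 xy; apply/eqP.
have: (x%:Z == y%:Z %[mod M%:Z])%Z by rewrite !modz_nat xy.
rewrite eqz_mod_dvd => /dvdz_trans/(_ (horner_sub_dvdz f _ _)).
by rewrite !fnatE // -eqz_mod_dvd !modz_nat eqz_nat.
Qed.

Definition fiter (a r : nat) : nat := iter r (fnat f) a.

Lemma fiter_gt0 a r : 0 < a -> 0 < fiter a r.
Proof. by move=> a_gt0; elim: r => //= r; exact: fnat_gt0. Qed.

Lemma iter_fnat_eqmod M t x y : 0 < x -> 0 < y ->
  x = y %[mod M] -> iter t (fnat f) x = iter t (fnat f) y %[mod M].
Proof.
move=> x_gt0 y_gt0 xy; elim: t => //= t; apply: fnat_eqmod; exact: fiter_gt0.
Qed.

Lemma fiter_eqmod_periodic M a i d r r' : 0 < a ->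
  fiter a i = fiter a (i + d) %[mod M] -> i <= r -> i <= r' ->
  r = r' %[mod d] -> fiter a r = fiter a r' %[mod M].
Proof.
move=> a_gt0 period.
have shift m n n' : fiter a n = fiter a n' %[mod M] ->
    fiter a (m + n) = fiter a (m + n') %[mod M].
  by rewrite /fiter !iterD; apply: iter_fnat_eqmod; exact: fiter_gt0.
have periodic t : fiter a (d * t + i) = fiter a i %[mod M].
  elim: t => [|t IH]; first by rewrite muln0.
  by rewrite mulnS [d + _]addnC -addnA [d + i]addnC (shift _ _ _ (esym period)).
wlog le_rr' : r r' / r <= r'.
  move=> W ir ir' rr'; have [le|lt] := leqP r r'; first exact: W.
  by apply/esym/W => //; exact: ltnW.
move=> ir _ /eqP; rewrite eq_sym eqn_mod_dvd // => /dvdnP[t r'E].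
have -> : r' = (r - i) + (d * t + i) by lia.
by rewrite (shift _ _ _ (periodic t)) subnK.
Qed.

Lemma red_map_natr p n : 0 < n -> red_map f (n%:R : 'F_p)%R = (fnat f n)%:R%R.
Proof.
move=> n_gt0; rewrite /red_map -[(n%:R)%R]/((n%:Z)%:~R : 'F_p)%R horner_map /=.
by rewrite fnatE.
Qed.

Lemma iter_red_map_natr p a r : 0 < a ->
  iter r (@red_map f p) (a%:R : 'F_p)%R = (fiter a r)%:R%R.
Proof. by move=> a_gt0; elim: r => //= r ->; rewrite red_map_natr ?fiter_gt0. Qed.

Lemma full_cycle_of_distinct_residues M a : 0 < a -> 1 < M ->
  (forall i j, 0 < i < j -> j <= M -> fiter a i %% M != fiter a j %% M) ->
  is_full_cycle f (pdiv M).
Proof.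
move=> a_gt0 M_gt1 distinct; set p := pdiv M.
have p_pr : prime p by exact: pdiv_prime.
have M_gt0 : 0 < M by exact: ltnW.
pose res (r : 'I_M) : 'I_M := Ordinal (ltn_pmod (fiter a r.+1) M_gt0).
have res_inj : injective res.
  move=> r r' /(congr1 val) /= /eqP; apply: contraTeq => ne.
  have [lt|gt|eq] := ltngtP r r'; last by case/eqP: ne; exact: val_inj.
    by apply: (distinct r.+1 r'.+1); rewrite ?ltnS ?lt ?ltn_ord.
  by rewrite eq_sym; apply: (distinct r'.+1 r.+1); rewrite ?ltnS ?gt ?ltn_ord.
apply: (@full_cycle_of_orbit _ _ (a%:R)%R) => y.
have y_lt_p : val y < p by apply: leq_trans (ltn_ord y) _; rewrite Fp_cast.
have y_lt_M : val y < M := leq_trans y_lt_p (dvdn_leq M_gt0 (pdiv_dvd M)).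
have /codomP[r yE] := injF_onto res_inj (Ordinal y_lt_M).
exists r; rewrite iter_red_map_natr //; apply: val_inj.
rewrite /= val_Fp_nat // -(modn_dvdm _ (pdiv_dvd M)).
by rewrite -[fiter a r.+1 %% M]/(val (res r)) -yE modn_small.
Qed.

Lemma iter_seq_eventual_residue a M : 0 < a ->
  (forall p, prime p -> ~ is_full_cycle f p) -> 0 < M ->
  exists c, forall b, tends_to_infty (iter_seq f a b) ->
    ends_in_residue (iter_seq f a b) M c.
Proof.
move=> a_gt0 no_cycle; elim/ltn_ind: M => M IH M_gt0.
have [M_le1|M_gt1] := leqP M 1.
  by exists 0 => b _; exists 0 => n _; rewrite (_ : M = 1) ?modn1 //; lia.
have [[i [j /and3P[/andP[i_gt0 ij] jM /eqP eq_ij]]]|no_repeat] :=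
  classic (exists i j, [&& 0 < i < j, j <= M & fiter a i %% M == fiter a j %% M]);
  last first.
  case: (no_cycle _ (pdiv_prime M_gt1)).
  apply: full_cycle_of_distinct_residues a_gt0 M_gt1 _ => i j ij jM.
  by apply/negP => /eqP e; apply: no_repeat; exists i, j; rewrite ij jM e eqxx.
set d := j - i; have [d_gt0 d_lt_M] : 0 < d /\ d < M by lia.
have [cd Hcd] := IH d d_lt_M d_gt0.
exists (fiter a (cd + i * d) %% M) => b b_infty.
have [N1 HN1] := Hcd b b_infty; have [N2 HN2] := b_infty i.
exists (maxn N1 N2).+1 => -[//|n]; rewrite ltnS geq_max => /andP[n1 n2].
apply: (fiter_eqmod_periodic (i := i) (d := d)) => //.
- by rewrite subnKC // ltnW.
- exact: HN2.
- exact: leq_trans (leq_pmulr i d_gt0) (leq_addl _ _).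
- by rewrite addnC modnMDl -(HN1 n n1) modn_mod.
Qed.

Lemma full_cycle_fiter_eqmod p a : prime p -> is_full_cycle f p -> 0 < a ->
  forall r r', fiter a r = fiter a r' %[mod p] -> r = r' %[mod p].
Proof.
move=> p_pr [s [sE one]] a_gt0 r r' /(Fp_nat_eqmod _ _ p_pr).
rewrite -!iter_red_map_natr // -!(eq_iter sE) => /iter_perm_eqmod.
by rewrite card_porbit_full_cycle // card_Fp.
Qed.

Lemma full_cycle_eventually_gt_id p : prime p -> is_full_cycle f p ->
  exists a, 0 < a /\ forall x, a <= x -> x < fnat f x.
Proof.
move=> p_pr fc; have period := @full_cycle_fiter_eqmod p 1 p_pr fc isT.
have p_neq1 : p <> 1 by move=> p1; rewrite p1 in p_pr.
have [|||n Hn] := @poly_eventually_gt_id f.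
- by move=> n /f_pos[m [m_gt0 ->]]; rewrite ltz_nat.
- move=> f_id; apply/p_neq1/eqmodSn_modulus1/(period 0 1).
  by rewrite /fiter /= /fnat f_id.
- move=> [c f_const]; apply/p_neq1/eqmodSn_modulus1/(period 1 2).
  by rewrite /fiter /= {2}/fnat f_const ?fnat_gt0 // /fnat f_const.
exists (absz n).+1; split=> // x nx; rewrite -ltz_nat -fnatE; last by lia.
by apply: Hn; lia.
Qed.

Lemma tends_to_infty_iter_seq a b : 0 < a -> (forall x, a <= x -> x < fnat f x) ->
  tends_to_infty (iter_seq f a b).
Proof.
move=> a_gt0 gt_id.
have fiter_ge r : a + r <= fiter a r.
  elim: r => [|r IH]; first by rewrite addn0.
  by rewrite addnS (leq_trans _ (gt_id _ _)) // (leq_trans (leq_addr _ _) IH).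
have iter_seq_ge n : n <= iter_seq f a b n.
  by elim: n => //= n IH; apply: leq_trans (fiter_ge _); lia.
by move=> M; exists M => n Mn; exact: leq_trans Mn (iter_seq_ge n).
Qed.

Lemma iter_seq_residue_start m a b c :
  (forall r r', fiter a r = fiter a r' %[mod m] -> r = r' %[mod m]) ->
  ends_in_residue (iter_seq f a b) m c -> b %% m = c.
Proof.
move=> fiter_inj [N yN]; set y := iter_seq f a b.
have back n : y n.+1 %% m = c -> y n.+2 %% m = c -> y n %% m = c.
  move=> e1 e2; rewrite -e1; apply: fiter_inj.
  by change (y n.+1 %% m = y n.+2 %% m); rewrite e1 e2.
have below k n : N <= n + k -> y n %% m = c.
  elim: k n => [|k IH] n; first by rewrite addn0; exact: yN.
  by move=> Nnk; apply: back; apply: IH; lia.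
exact: (below N 0).
Qed.

End PositiveOrbits.

Theorem theorem1p3 (f : {poly int})
  (hf : forall n : nat, (0 < n)%N -> exists m : nat, (0 < m)%N /\ (f.[n%:Z] = m%:Z)%R) :
  (forall p : nat, prime p -> ~ is_full_cycle f p) <->
  (forall a b : nat, (0 < a)%N -> (0 < b)%N -> tends_to_infty (iter_seq f a b) ->
     forall p : nat, prime p ->
       exists z : padic_int p, padic_lim p (iter_seq f a b) z /\
         forall b' : nat, (0 < b')%N -> tends_to_infty (iter_seq f a b') ->
           forall z' : padic_int p, padic_lim p (iter_seq f a b') z' -> z' = z).
Proof.
split=> [no_cycle a b a_gt0 _ b_infty p p_pr | limits p p_pr fc].
  have pk_gt0 k : 0 < p ^ k by rewrite expn_gt0 prime_gt0.
  have [c residues] := functional_choice _ (fun k =>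
    iter_seq_eventual_residue hf a_gt0 no_cycle (pk_gt0 k)).
  have [z zE] :=
    padic_int_of_residues (prime_gt0 p_pr) (fun k => residues k b b_infty).
  exists z; split=> [k|b' _ b'_infty z' z'_lim]; first by rewrite zE; exact: residues.
  apply: padic_int_ext => k; rewrite zE.
  exact: ends_in_residue_unique (z'_lim k) (residues k b' b'_infty).
have [a [a_gt0 gt_id]] := full_cycle_eventually_gt_id hf p_pr fc.
have a_infty b := tends_to_infty_iter_seq b a_gt0 gt_id.
have start b z : padic_lim p (iter_seq f a b) z -> b %% p = sval z 1.
  move=> /(_ 1); rewrite expn1; apply: iter_seq_residue_start.
  exact: (full_cycle_fiter_eqmod hf p_pr fc a_gt0).
have [z [z_lim z_unique]] := limits a 1 a_gt0 isT (a_infty 1) p p_pr.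
have [z2 [z2_lim _]] := limits a 2 a_gt0 isT (a_infty 2) p p_pr.
have p1 : p = 1.
  apply: (@eqmodSn_modulus1 p 1).
  by rewrite (start 1 z) // (start 2 z2) // (z_unique 2 isT (a_infty 2) z2).
by rewrite p1 in p_pr.
Qed.
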